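(* For any weighted undirected graph $G=(V,E,w)$ with $n=|V|\ge2$ and any HC-tree $\mathcal T$ of $G$, $$C_G(\mathcal T)\ \ge\ \frac n3\cdot\min\Big\{w(S,\bar S)\ :\ S\subseteq V,\ \frac n3\le |S|,|\bar S|\le\frac{2n}3\Big\}.$$
   Context: For $G=(V,E,w)$ with nonnegative weights, an HC-tree is a rooted tree whose leaves are in bijection with $V$; its cost is $C_G(\mathcal T)=\sum_{(u,v)\in E}w(u,v)\,|\mathrm{leaves}(\mathcal T[u\vee v])|$ where $u\vee v$ is the lowest common ancestor and $\mathrm{leaves}(\mathcal T[z])$ the leaf set of the subtree rooted at $z$. $\bar S=V\setminus S$, and $w(S,\bar S)$ is the total weight of edges between $S$ and $\bar S$. *)

From mathcomp Require Import all_boot all_order all_algebra.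
Set Implicit Arguments. Unset Strict Implicit. Unset Printing Implicit Defensive.
Import Order.TTheory GRing.Theory Num.Theory.
Local Open Scope ring_scope.

Inductive hctree (T : Type) : Type :=
  | Leaf of T
  | Node of seq (hctree T).
Arguments Leaf {T}.
Arguments Node {T}.

Fixpoint leaves (T : Type) (t : hctree T) : seq T :=
  match t with
  | Leaf x => [:: x]
  | Node ts => (fix go (s : seq (hctree T)) : seq T :=
                  match s with
                  | [::] => [::]
                  | c :: s' => leaves c ++ go s'
                  end) ts
  end.

(* every internal node has at least one child (so all leaves are labelled) *)
Fixpoint wf_tree (T : Type) (t : hctree T) : bool :=
  match t with
  | Leaf _ => true
  | Node ts => (~~ nilp ts) &&
               (fix go (s : seq (hctree T)) : bool :=
                  match s with
                  | [::] => true
                  | c :: s' => wf_tree c && go s'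
                  end) ts
  end.

Definition is_hctree (V : finType) (t : hctree V) : bool :=
  wf_tree t && perm_eq (leaves t) (enum V).

(* leaves(T[u \/ v]): leaf set of the subtree rooted at the lowest common
   ancestor of the leaves u and v: descend into the (unique, as labels are
   distinct) child containing both, while one exists. *)
Fixpoint lca_leaves (T : eqType) (t : hctree T) (u v : T) : seq T :=
  match t with
  | Leaf x => [:: x]
  | Node ts => (fix go (s : seq (hctree T)) : seq T :=
                  match s with
                  | [::] => leaves t
                  | c :: s' => if (u \in leaves c) && (v \in leaves c)
                               then lca_leaves c u v else go s'
                  end) ts
  end.

(* Cost C_G(T) = sum over edges {u,v} of w(u,v) |leaves(T[u \/ v])|.
   Each unordered edge appears twice among ordered pairs u != v. *)
Definition hc_cost (R : numDomainType) (V : finType) (w : V -> V -> R)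
    (t : hctree V) : R :=
  2^-1 * \sum_(u : V) \sum_(v : V | u != v)
           w u v * (size (lca_leaves t u v))%:R.

Definition cut_weight (R : numDomainType) (V : finType) (w : V -> V -> R)
    (S : {set V}) : R :=
  \sum_(u in S) \sum_(v in ~: S) w u v.

Definition balanced (R : numFieldType) (V : finType) (S : {set V}) : bool :=
  let n : R := #|V|%:R in
  [&& n / 3%:R <= #|S|%:R, #|S|%:R <= 2%:R * n / 3%:R,
      n / 3%:R <= #|~: S|%:R & #|~: S|%:R <= 2%:R * n / 3%:R].

(* Walk down the tree from the root while some child still has more than 2n/3
   leaves.  At the node reached, either one child has between n/3 and 2n/3
   leaves, or all children have fewer than n/3 and a prefix of them has
   between n/3 and 2n/3.  Either way we get a balanced set S of leaves which
   splits no child, so every edge cut by S has its lowest common ancestor at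
   that node or above, with at least n/3 leaves below it.  Summing over the
   cut edges gives C_G(T) >= (n/3) w(S, ~S) >= (n/3) m. *)

From Stdlib Require List.
From mathcomp Require Import all_boot all_order all_algebra zify lra.
Import Order.TTheory GRing.Theory Num.Theory.
Set Implicit Arguments. Unset Strict Implicit.

Lemma has_InP (T : Type) (p : pred T) (s : seq T) :
  reflect (exists2 x, List.In x s & p x) (has p s).
Proof.
apply: (iffP idP) => [/List.existsb_exists [x [xs px]] | [x xs px]].
  by exists x.
by apply/List.existsb_exists; exists x.
Qed.

Lemma sumn_take_between d n (s : seq nat) :
  all (fun x => d * x < n) s -> n <= d * sumn s ->
  exists2 k, n <= d * sumn (take k s) & d * sumn (take k s) <= 2 * n.
Proof.
move=> /allP small large.
have reach : exists k, n <= d * sumn (take k s) by exists (size s); rewrite take_size.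
case: (ex_minnP reach) => [[|k] Pk min_k].
  by exists 0 => //; rewrite take0 muln0.
exists k.+1 => //.
have ks : k < size s.
  rewrite ltnNge; apply/negP => sk.
  by have := min_k k; rewrite take_oversize // large ltnn => /(_ isT).
have below : d * sumn (take k s) < n by rewrite ltnNge; apply/negP => /min_k; rewrite ltnn.
have last_small : d * nth 0 s k < n := small _ (mem_nth 0 ks).
by rewrite (take_nth 0 ks) sumn_rcons mulnDr; lia.
Qed.

Local Notation forest_leaves ts := (flatten (map (@leaves _) ts)).

Fixpoint hctree_ind (T : Type) (P : hctree T -> Prop) (P_leaf : forall x, P (Leaf x))
    (P_node : forall ts, (forall c, List.In c ts -> P c) -> P (Node ts))
    (t : hctree T) : P t :=
  match t with
  | Leaf x => P_leaf x
  | Node ts => P_node ts ((fix all_children s : forall c, List.In c s -> P c :=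
       match s return forall c, List.In c s -> P c with
       | [::] => fun c in_nil => False_ind _ in_nil
       | c' :: s' => fun c in_s => match in_s with
           | or_introl e => eq_rect c' P (hctree_ind P_leaf P_node c') c e
           | or_intror in_s' => all_children s' c in_s' end
       end) ts)
  end.

Lemma leaves_Node (T : Type) (ts : seq (hctree T)) : leaves (Node ts) = forest_leaves ts.
Proof. by elim: ts => [|c s /= ->]. Qed.

Section LeafSets.
Variable V : eqType.

Lemma lca_leaves_NodeE (ts : seq (hctree V)) (u v : V) :
  lca_leaves (Node ts) u v =
  foldr (fun c rest => if (u \in leaves c) && (v \in leaves c)
                       then lca_leaves c u v else rest) (leaves (Node ts)) ts.
Proof.
set d := leaves (Node ts).
change ((fix go (s : seq (hctree V)) : seq V := match s with
  | [::] => d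
  | c :: s' => if (u \in leaves c) && (v \in leaves c) then lca_leaves c u v else go s'
  end) ts = foldr (fun c rest => if (u \in leaves c) && (v \in leaves c)
                                  then lca_leaves c u v else rest) d ts).
by clearbody d; elim: ts => [|c s /= ->].
Qed.

Lemma forest_leavesP (ts : seq (hctree V)) (y : V) :
  reflect (exists2 c, List.In c ts & y \in leaves c) (y \in forest_leaves ts).
Proof.
elim: ts => [|c s IH] /=; first by right=> [[]].
rewrite mem_cat; apply: (iffP orP) => [[yc | /IH [c' c's yc']] | [c' [<-|c's] yc']].
- by exists c; [left|].
- by exists c'; [right|].
- by left.
- by right; apply/IH; exists c'.
Qed.

Lemma forest_leaves_sub (p ts : seq (hctree V)) (y : V) :
  (forall c, List.In c p -> List.In c ts) ->
  y \in forest_leaves p -> y \in forest_leaves ts.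
Proof.
by move=> pts /forest_leavesP [c /pts cts yc]; apply/forest_leavesP; exists c.
Qed.

Section UniqForest.
Variable ts : seq (hctree V).
Hypothesis ts_uniq : uniq (forest_leaves ts).

Lemma forest_child_uniq (c : hctree V) : List.In c ts -> uniq (leaves c).
Proof.
move: ts_uniq; elim: ts => //= a s IH.
by rewrite cat_uniq => /and3P [? _ ?] [<- | /IH]; auto.
Qed.

Lemma forest_child_disjoint (c c' : hctree V) (y : V) :
  List.In c ts -> List.In c' ts -> y \in leaves c -> y \in leaves c' -> c = c'.
Proof.
move: ts_uniq; elim: ts => //= a s IH.
rewrite cat_uniq => /and3P [_ disj s_uniq] [<- | cs] [<- | c's] yc yc' //.
- by case/hasP: disj; exists y => //; apply/forest_leavesP; exists c'.
- by case/hasP: disj; exists y => //; apply/forest_leavesP; exists c.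
- exact: IH.
Qed.

Lemma lca_leaves_Node_child (c : hctree V) (u v : V) :
  List.In c ts -> u \in leaves c -> v \in leaves c ->
  lca_leaves (Node ts) u v = lca_leaves c u v.
Proof.
rewrite lca_leaves_NodeE; move: (leaves (Node ts)) => d cts uc vc.
have in_c c' : List.In c' ts -> u \in leaves c' -> c' = c.
  by move=> c'ts uc'; apply: forest_child_disjoint uc' uc.
elim: ts in_c cts => //= a s IH in_c [ac | cs].
  by rewrite ac uc vc.
case: ifP => [/andP [ua _] | _]; last by apply: IH => // c' ?; apply: in_c; right.
by rewrite (in_c a) //; left.
Qed.

Lemma lca_leaves_Node_top (u v : V) :
  (forall c, List.In c ts -> ~~ ((u \in leaves c) && (v \in leaves c))) ->
  lca_leaves (Node ts) u v = leaves (Node ts).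
Proof.
rewrite lca_leaves_NodeE; move: (leaves (Node ts)) => d.
elim: ts => //= c s IH split_c.
by rewrite (negbTE (split_c c (or_introl erefl))) IH // => c' ?; apply: split_c; right.
Qed.

Lemma forest_leaves_unsplit (p : seq (hctree V)) (c : hctree V) (u v : V) :
  (forall c', List.In c' p -> List.In c' ts) -> List.In c ts ->
  u \in leaves c -> v \in leaves c ->
  (u \in forest_leaves p) = (v \in forest_leaves p).
Proof.
move=> pts cts.
suff imp x y : x \in leaves c -> y \in leaves c ->
    x \in forest_leaves p -> y \in forest_leaves p.
  by move=> uc vc; apply/idP/idP; apply: imp.
move=> xc yc /forest_leavesP [c' c'p xc'].
rewrite (forest_child_disjoint cts (pts _ c'p) xc xc') in yc.
by apply/forest_leavesP; exists c'.
Qed.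

End UniqForest.
End LeafSets.

Section BalancedSeparator.
Variable V : finType.

Lemma balanced_subforest n (ts : seq (hctree V)) :
  uniq (forest_leaves ts) ->
  (forall c, List.In c ts -> 3 * size (leaves c) <= 2 * n) ->
  n <= 3 * size (forest_leaves ts) ->
  exists2 p, (forall c, List.In c p -> List.In c ts) &
    uniq (forest_leaves p) /\ n <= 3 * size (forest_leaves p) <= 2 * n.
Proof.
move=> ts_uniq le_2n large.
case: (has_InP (fun c => n <= 3 * size (leaves c)) ts) => [[c cts mid] | no_mid].
  exists [:: c]; first by move=> c' [<- | []].
  by rewrite /= cats0 (forest_child_uniq ts_uniq cts) mid le_2n.
have small : all (fun x => 3 * x < n) (shape (map (@leaves V) ts)).
  rewrite /shape !all_map -[all _ _]negbK -has_predC.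
  apply/has_InP => [[c cts /= big]]; apply: no_mid; exists c => //.
  by rewrite leqNgt.
rewrite size_flatten in large.
have [k lo hi] := sumn_take_between small large.
exists (take k ts).
  by move=> c; rewrite -{2}(cat_take_drop k ts) => ?; apply: List.in_or_app; left.
split; last by rewrite size_flatten /shape !map_take lo.
by move: ts_uniq; rewrite -{1}(cat_take_drop k ts) map_cat flatten_cat cat_uniq => /and3P [].
Qed.

Lemma balanced_separator n (x : hctree V) :
  2 <= n -> uniq (leaves x) -> 2 * n < 3 * size (leaves x) ->
  exists S : {set V}, [/\ n <= 3 * #|S| <= 2 * n, {subset S <= leaves x} &
    {in leaves x &, forall u v, (u \in S) != (v \in S) ->
       n <= 3 * size (lca_leaves x u v)}].
Proof.
move=> n_ge2; elim/hctree_ind: x => [y | ts IH]; first by rewrite /=; lia.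
move=> top_uniq top_large.
have ts_uniq : uniq (forest_leaves ts) by rewrite -leaves_Node.
have top_ge : n <= 3 * size (leaves (Node ts)).
  by apply: leq_trans (ltnW top_large); rewrite leq_pmull.
have lca_top u v : lca_leaves (Node ts) u v = leaves (Node ts) ->
    n <= 3 * size (lca_leaves (Node ts) u v).
  by move=> ->.
case: (has_InP (fun c => 2 * n < 3 * size (leaves c)) ts) => [[c cts c_large] | no_large].
  have [S [bal S_c S_sep]] := IH c cts (forest_child_uniq ts_uniq cts) c_large.
  exists S; split=> // [y /S_c yc | u v _ _ sep_uv].
    by rewrite leaves_Node; apply/forest_leavesP; exists c.
  case uv_c: ((u \in leaves c) && (v \in leaves c)).
    case/andP: uv_c => uc vc.
    by rewrite (lca_leaves_Node_child ts_uniq cts uc vc); apply: S_sep.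
  apply/lca_top/lca_leaves_Node_top => // c' c'ts; apply/negP => /andP [uc' vc'].
  have c'_c y : y \in S -> y \in leaves c' -> c' = c.
    by move=> /S_c yc yc'; apply: (forest_child_disjoint ts_uniq c'ts cts yc' yc).
  have [y yS yc'] : exists2 y, y \in S & y \in leaves c'.
    move: sep_uv; case: (boolP (u \in S)) => [uS _ | _ /negPn vS].
      by exists u.
    by exists v.
  by move: uv_c; rewrite -(c'_c y yS yc') uc' vc'.
have le_2n c : List.In c ts -> 3 * size (leaves c) <= 2 * n.
  by move=> cts; rewrite leqNgt; apply/negP => big; apply: no_large; exists c.
have [|p pts [p_uniq bal]] := balanced_subforest ts_uniq le_2n.
  by rewrite -leaves_Node.
exists [set y in forest_leaves p]; split.
- by rewrite cardsE (card_uniqP p_uniq).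
- by move=> y; rewrite inE leaves_Node; apply: forest_leaves_sub.
move=> u v _ _ sep_uv; apply/lca_top/lca_leaves_Node_top => c cts.
apply/negP => /andP [uc vc].
by move: sep_uv; rewrite !inE (forest_leaves_unsplit ts_uniq pts cts uc vc) eqxx.
Qed.

End BalancedSeparator.

Local Open Scope ring_scope.

Section CutCost.
Variables (R : realFieldType) (V : finType) (w : V -> V -> R).

Lemma sum_separated_pairs (S : {set V}) :
  \sum_u \sum_(v | (u \in S) != (v \in S)) w u v =
  cut_weight w S + cut_weight w (~: S).
Proof.
rewrite (bigID (mem S)) /=; congr (_ + _).
  by apply: eq_bigr => u uS; apply: eq_bigl => v; rewrite inE uS.
apply: eq_big => [u | u uS]; first by rewrite inE.
by apply: eq_bigl => v; rewrite setCK (negbTE uS); case: (v \in S).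
Qed.

Hypothesis w_sym : forall u v, w u v = w v u.

Lemma cut_weightC (S : {set V}) : cut_weight w (~: S) = cut_weight w S.
Proof.
rewrite /cut_weight setCK exchange_big.
by apply: eq_bigr => u _; apply: eq_bigr => v _; rewrite w_sym.
Qed.

Hypothesis w_ge0 : forall u v, 0 <= w u v.

Lemma hc_cost_ge_cut (t : hctree V) (S : {set V}) (k : R) :
  (forall u v, (u \in S) != (v \in S) -> k <= (size (lca_leaves t u v))%:R) ->
  k * cut_weight w S <= hc_cost w t.
Proof.
move=> lca_ge.
pose F u v := w u v * (size (lca_leaves t u v))%:R.
have separated_le : \sum_u \sum_(v | (u \in S) != (v \in S)) k * w u v <=
                    \sum_u \sum_(v | u != v) F u v.
  apply: ler_sum => u _; rewrite big_mkcond [X in _ <= X]big_mkcond /=.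
  apply: ler_sum => v _.
  case: ifP => [sep | _]; last by case: ifP => // _; rewrite mulr_ge0.
  have -> : u != v by apply: contraTneq sep => ->; rewrite eqxx.
  by rewrite mulrC ler_wpM2l ?lca_ge.
have sum_k : \sum_u \sum_(v | (u \in S) != (v \in S)) k * w u v =
             2 * (k * cut_weight w S).
  under eq_bigr do rewrite -mulr_sumr.
  by rewrite -mulr_sumr sum_separated_pairs cut_weightC; lra.
rewrite /hc_cost -/F; move: separated_le; rewrite sum_k; lra.
Qed.

End CutCost.

Lemma balanced_of_card (R : realFieldType) (V : finType) (S : {set V}) :
  (#|V| <= 3 * #|S| <= 2 * #|V|)%N -> balanced R S.
Proof.
case/andP; rewrite -(ler_nat R) -[(3 * _ <= _)%N](ler_nat R) !natrM => lo hi.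
have card_C : #|S|%:R + #|~: S|%:R = #|V|%:R :> R by rewrite -natrD cardsC.
by apply/and4P; split; lra.
Qed.

Theorem lemma5p8 (R : realFieldType) (V : finType) (w : V -> V -> R)
    (w_sym : forall u v, w u v = w v u)
    (w_ge0 : forall u v, 0 <= w u v)
    (n_ge2 : (2 <= #|V|)%N)
    (t : hctree V) (ht : is_hctree t)
    (m : R)
    (m_attained : exists2 S : {set V}, balanced R S & cut_weight w S = m)
    (m_min : forall S : {set V}, balanced R S -> m <= cut_weight w S) :
  hc_cost w t >= (#|V|%:R / 3%:R) * m.
Proof.
case/andP: ht => _ leaves_perm.
have t_uniq : uniq (leaves t) by rewrite (perm_uniq leaves_perm) enum_uniq.
have t_size : size (leaves t) = #|V| by rewrite (perm_size leaves_perm) cardT.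
have t_all u : u \in leaves t by rewrite (perm_mem leaves_perm) mem_enum.
have [|S [bal _ S_sep]] := balanced_separator n_ge2 t_uniq.
  by rewrite t_size; lia.
apply: le_trans (hc_cost_ge_cut w_sym w_ge0 (S := S) (k := #|V|%:R / 3%:R) _).
  by apply: ler_wpM2l; [rewrite divr_ge0 | apply/m_min/balanced_of_card].
move=> u v /(S_sep u v (t_all u) (t_all v)) lca_large.
by rewrite ler_pdivrMr ?ltr0n // -natrM ler_nat mulnC.
Qed.
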